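(* Let $p>a\ge 1$ be integers and let $g_{i,j}\in\{1,-1\}$ for $i=1,\dots,a$ and $j=1,\dots,p-a$. Put $\eta_i'=\sigma_1^{g_{i,1}}\sigma_2^{g_{i,2}}\cdots\sigma_{p-a-1}^{g_{i,p-a-1}}$ and $\eta_i=\eta_i'\,\sigma_{p-a}^{g_{i,p-a}}$, and for $j\ge p-a$ put $\kappa_j=\sigma_{p-a+1}\sigma_{p-a+2}\cdots\sigma_j$ (so $\kappa_{p-a}$ is the empty word). Then the $p$-braid \[\prod_{k=1}^{a}\Big(\eta_k\,\kappa_{p-k}\,\sigma_{p-k+1}^{-1}\sigma_{p-k+2}^{-1}\cdots\sigma_{p-1}^{-1}\Big) =\eta_1\kappa_{p-1}\cdot\eta_2\kappa_{p-2}\sigma_{p-1}^{-1}\cdots\eta_{a-1}\kappa_{p-a+1}\sigma_{p-a+2}^{-1}\cdots\sigma_{p-1}^{-1}\cdot\eta_a\sigma_{p-a+1}^{-1}\cdots\sigma_{p-1}^{-1}\] is Markov equivalent to the braid $\eta_1'\eta_2'\cdots\eta_a'$.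
   Context: $\sigma_1,\sigma_2,\dots$ denote the standard Artin generators of the braid groups. Two braids (possibly with different numbers of strands) are Markov equivalent, written $\sim_M$, if their closures are isotopic links. *)

From Stdlib Require Import List Arith.
Import ListNotations.

(* A letter (i, true) is sigma_i, (i, false) is sigma_i^{-1}. *)
Definition letter := (nat * bool)%type.
Definition word := list letter.

Definition valid (n : nat) (w : word) : Prop :=
  Forall (fun l => 1 <= fst l /\ fst l < n) w.

Inductive braid_rel (n : nat) : word -> word -> Prop :=
  | br_inv1 i b : 1 <= i -> i < n -> braid_rel n [(i, b); (i, negb b)] []
  | br_comm i j b c : 1 <= i -> i < n -> 1 <= j -> j < n -> i + 2 <= j ->
      braid_rel n [(i, b); (j, c)] [(j, c); (i, b)]
  | br_yb i : 1 <= i -> i + 1 < n ->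
      braid_rel n [(i, true); (i+1, true); (i, true)]
                  [(i+1, true); (i, true); (i+1, true)].

(* By Markov's theorem
   this is exactly "closures are isotopic links". *)
Inductive markov_step : nat * word -> nat * word -> Prop :=
  | ms_rel n w1 u v w2 : valid n w1 -> valid n w2 -> braid_rel n u v ->
      markov_step (n, w1 ++ u ++ w2) (n, w1 ++ v ++ w2)
  | ms_conj n u v : valid n u -> valid n v ->
      markov_step (n, u ++ v) (n, v ++ u)
  | ms_stab n w b : 1 <= n -> valid n w ->
      markov_step (n, w) (S n, w ++ [(n, b)]).

Inductive markov_equiv : nat * word -> nat * word -> Prop :=
  | me_refl x : markov_equiv x x
  | me_step x y : markov_step x y -> markov_equiv x y
  | me_sym x y : markov_equiv x y -> markov_equiv y x
  | me_trans x y z : markov_equiv x y -> markov_equiv y z -> markov_equiv x z.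

(* The words of the lemma; g i j = true means g_{i,j} = 1, false means -1. *)
Definition eta' (p a : nat) (g : nat -> nat -> bool) (i : nat) : word :=
  map (fun j => (j, g i j)) (seq 1 (p - a - 1)).
Definition eta (p a : nat) (g : nat -> nat -> bool) (i : nat) : word :=
  eta' p a g i ++ [(p - a, g i (p - a))].
Definition kappa (p a j : nat) : word :=
  map (fun k => (k, true)) (seq (p - a + 1) (j - (p - a))).
Definition inv_tail (p k : nat) : word :=
  map (fun m => (m, false)) (seq (p - k + 1) (k - 1)).
Definition lhs_braid (p a : nat) (g : nat -> nat -> bool) : word :=
  flat_map (fun k => eta p a g k ++ kappa p a (p - k) ++ inv_tail p k) (seq 1 a).
Definition rhs_braid (p a : nat) (g : nat -> nat -> bool) : word :=
  flat_map (eta' p a g) (seq 1 a).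

(* Write m = p - a; induction on a peels off the last factor.  A descending run
   σ_(c+j)⋯σ_(c+1) standing to the left of a factor can be moved through it: it comes out on
   the right one generator longer, σ_(c+j)⋯σ_c, and the factor becomes the corresponding
   factor of the braid on one strand fewer.  Starting from the empty run, this rewrites the
   first a-1 factors on p strands as the same factors on p-1 strands followed by
   σ_(p-1)⋯σ_(m+1).  That run commutes with η'_a and turns σ_m^± σ_(m+1)^-1⋯σ_(p-1)^-1 into
   σ_m^-1⋯σ_(p-2)^-1 σ_(p-1)^± σ_(p-2)⋯σ_m.  Now σ_(p-1) occurs only once, so a conjugation
   and a destabilization remove it, and after a further conjugation the two runs around it
   cancel, leaving the braid for a-1 on p-1 strands followed by η'_a. *)

From Stdlib Require Import List Arith Lia RelationClasses.
Import ListNotations.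

Inductive braid_equiv (n : nat) : word -> word -> Prop :=
  | be_refl w : braid_equiv n w w
  | be_rel w1 u v w2 : valid n w1 -> valid n w2 -> braid_rel n u v ->
      braid_equiv n (w1 ++ u ++ w2) (w1 ++ v ++ w2)
  | be_sym u v : braid_equiv n u v -> braid_equiv n v u
  | be_trans u v w : braid_equiv n u v -> braid_equiv n v w -> braid_equiv n u w.

#[local] Instance braid_equiv_Equivalence n : Equivalence (braid_equiv n).
Proof. split; [exact (be_refl n) | exact (be_sym n) | exact (be_trans n)]. Qed.

Lemma braid_equiv_markov n u v : braid_equiv n u v -> markov_equiv (n, u) (n, v).
Proof.
  induction 1.
  - apply me_refl.
  - apply me_step, ms_rel; assumption.
  - apply me_sym; assumption.
  - eapply me_trans; eassumption.
Qed.

Lemma braid_equiv_ctx n w1 w2 u v : valid n w1 -> valid n w2 -> braid_equiv n u v ->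
  braid_equiv n (w1 ++ u ++ w2) (w1 ++ v ++ w2).
Proof.
  intros H1 H2 H; induction H.
  - reflexivity.
  - replace (w1 ++ (w0 ++ u ++ w3) ++ w2) with ((w1 ++ w0) ++ u ++ (w3 ++ w2))
      by (rewrite <- !app_assoc; reflexivity).
    replace (w1 ++ (w0 ++ v ++ w3) ++ w2) with ((w1 ++ w0) ++ v ++ (w3 ++ w2))
      by (rewrite <- !app_assoc; reflexivity).
    apply be_rel; try assumption; apply Forall_app; split; assumption.
  - symmetry; assumption.
  - etransitivity; eassumption.
Qed.

Lemma braid_equiv_of_rel n u v : braid_rel n u v -> braid_equiv n u v.
Proof.
  intros H; generalize (be_rel n [] u v [] (Forall_nil _) (Forall_nil _) H).
  simpl; rewrite !app_nil_r; trivial.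
Qed.

Lemma Forall_map_seq (P : letter -> Prop) b lo len :
  (forall k, lo <= k < lo + len -> P (k, b)) ->
  Forall P (map (fun k => (k, b)) (seq lo len)).
Proof.
  intros H; apply Forall_map, Forall_forall; intros k Hk.
  apply in_seq in Hk; apply H; exact Hk.
Qed.

Definition in_range (lo hi : nat) (w : word) : Prop :=
  Forall (fun l => lo <= fst l <= hi) w.

Definition word_inv (w : word) : word := rev (map (fun l => (fst l, negb (snd l))) w).

Definition asc (lo len : nat) : word := map (fun k => (k, true)) (seq lo len).
Definition asc_neg (lo len : nat) : word := map (fun k => (k, false)) (seq lo len).
Definition desc (lo len : nat) : word := rev (asc lo len).

Arguments asc : simpl never.
Arguments asc_neg : simpl never.
Arguments desc : simpl never.

Ltac solve_range :=
  unfold valid, in_range, word_inv, desc, asc, asc_neg in *;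
  repeat match goal with
  | |- Forall _ (_ ++ _) => apply Forall_app; split
  | |- Forall _ (_ :: _) => constructor
  | |- Forall _ [] => constructor
  | |- Forall _ (rev _) => apply Forall_rev
  | |- Forall _ (map (fun k => (k, _)) (seq _ _)) => apply Forall_map_seq; intros
  | |- Forall _ (map _ _) => apply Forall_map
  | H : Forall _ ?w |- Forall _ ?w =>
      eapply Forall_impl; [|exact H]; intros [? ?]; simpl; intros; lia
  end; simpl in *; try lia.

Ltac norm_words :=
  repeat rewrite <- app_assoc; cbn [app negb fst snd Nat.add];
  repeat rewrite <- app_assoc; rewrite ?app_nil_r.

Lemma braid_equiv_ctx_eq n w1 w2 u v x : braid_equiv n u v -> x = w1 ++ u ++ w2 ->
  valid n w1 -> valid n w2 -> braid_equiv n x (w1 ++ v ++ w2).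
Proof. intros H -> H1 H2; apply braid_equiv_ctx; assumption. Qed.

(* [rewrite_at w1 w2 H] rewrites the goal [braid_equiv n x z] along [H : braid_equiv n u v]
   at the occurrence of [u] in [x = w1 ++ u ++ w2] (up to associativity). *)
Ltac rewrite_at w1 w2 H :=
  etransitivity;
    [apply (braid_equiv_ctx_eq _ w1 w2 _ _ _ H);
       [norm_words; reflexivity | solve_range | solve_range] |].

Ltac close_words := norm_words; reflexivity.

Lemma braid_cancel n i b : 1 <= i < n -> braid_equiv n [(i, b); (i, negb b)] [].
Proof. intros; apply braid_equiv_of_rel; constructor; lia. Qed.

Lemma braid_comm n i j b c : 1 <= i < n -> 1 <= j < n -> (i + 2 <= j \/ j + 2 <= i) ->
  braid_equiv n [(i, b); (j, c)] [(j, c); (i, b)].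
Proof.
  intros Hi Hj [Hij | Hji].
  - apply braid_equiv_of_rel; constructor; lia.
  - symmetry; apply braid_equiv_of_rel; constructor; lia.
Qed.

Lemma braid_yb n i : 1 <= i -> S i < n ->
  braid_equiv n [(i, true); (S i, true); (i, true)] [(S i, true); (i, true); (S i, true)].
Proof. intros; rewrite <- Nat.add_1_r; apply braid_equiv_of_rel; constructor; lia. Qed.

Lemma word_inv_involutive w : word_inv (word_inv w) = w.
Proof.
  unfold word_inv; rewrite map_rev, rev_involutive, map_map.
  rewrite <- map_id; apply map_ext; intros [i b]; simpl.
  rewrite Bool.negb_involutive; reflexivity.
Qed.

Lemma valid_word_inv n w : valid n w -> valid n (word_inv w).
Proof. intros; solve_range. Qed.

Lemma braid_equiv_app_inv n w : valid n w -> braid_equiv n (w ++ word_inv w) [].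
Proof.
  induction w as [|[i b] w IH]; intros Hw; [reflexivity|].
  inversion Hw as [|? ? Hib Hw']; subst; simpl in Hib.
  change (word_inv ((i, b) :: w)) with (word_inv w ++ [(i, negb b)]).
  rewrite_at [(i, b)] [(i, negb b)] (IH Hw').
  apply braid_cancel; lia.
Qed.

Lemma braid_equiv_inv n u v : valid n u -> valid n v -> braid_equiv n u v ->
  braid_equiv n (word_inv u) (word_inv v).
Proof.
  intros Hu Hv Huv.
  assert (Hv' := braid_equiv_app_inv n (word_inv v) (valid_word_inv n v Hv)).
  rewrite word_inv_involutive in Hv'.
  symmetry.
  rewrite_at (word_inv v) (@nil letter) (be_sym _ _ _ (braid_equiv_app_inv n u Hu)).
  rewrite_at (word_inv v) (word_inv u) Huv.
  rewrite_at (@nil letter) (word_inv u) Hv'.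
  close_words.
Qed.

Lemma braid_conj_adjacent n i h : 1 <= i -> S i < n ->
  braid_equiv n [(S i, true); (i, h); (S i, false)] [(i, false); (S i, h); (i, true)].
Proof.
  intros Hi Hn.
  assert (Hpos : braid_equiv n [(S i, true); (i, true); (S i, false)]
                               [(i, false); (S i, true); (i, true)]).
  { rewrite_at (@nil letter) [(S i, true); (i, true); (S i, false)]
      (be_sym _ _ _ (braid_cancel n i false ltac:(lia))).
    rewrite_at [(i, false)] [(S i, false)] (braid_yb n i Hi Hn).
    rewrite_at [(i, false); (S i, true); (i, true)] (@nil letter)
      (braid_cancel n (S i) true ltac:(lia)).
    close_words. }
  destruct h; [exact Hpos|].
  apply (braid_equiv_inv n) in Hpos; [exact Hpos | solve_range | solve_range].
Qed.

Lemma braid_comm_far n u v lo1 hi1 lo2 hi2 :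
  1 <= lo1 -> hi1 < n -> 1 <= lo2 -> hi2 < n ->
  in_range lo1 hi1 u -> in_range lo2 hi2 v -> (hi1 + 2 <= lo2 \/ hi2 + 2 <= lo1) ->
  braid_equiv n (u ++ v) (v ++ u).
Proof.
  intros Hlo1 Hhi1 Hlo2 Hhi2 Hu Hv Hfar.
  assert (Hletter : forall l, lo1 <= fst l <= hi1 -> braid_equiv n ([l] ++ v) (v ++ [l])).
  { intros [i b] Hl; simpl in Hl.
    induction v as [|[j c] v IH]; [reflexivity|].
    inversion Hv as [|? ? Hj Hv']; subst; simpl in Hj.
    rewrite_at (@nil letter) v (braid_comm n i j b c ltac:(lia) ltac:(lia) ltac:(lia)).
    rewrite_at [(j, c)] (@nil letter) (IH Hv'). close_words. }
  induction u as [|l u IH]; [rewrite app_nil_r; reflexivity|].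
  inversion Hu as [|? ? Hl Hu']; subst.
  rewrite_at [l] (@nil letter) (IH Hu').
  rewrite_at (@nil letter) u (Hletter l Hl). close_words.
Qed.

Lemma asc_S lo len : asc lo (S len) = asc lo len ++ [(lo + len, true)].
Proof. unfold asc; rewrite seq_S, map_app; reflexivity. Qed.

Lemma asc_neg_S lo len : asc_neg lo (S len) = asc_neg lo len ++ [(lo + len, false)].
Proof. unfold asc_neg; rewrite seq_S, map_app; reflexivity. Qed.

Lemma desc_S lo len : desc lo (S len) = (lo + len, true) :: desc lo len.
Proof. unfold desc; rewrite asc_S, rev_app_distr; reflexivity. Qed.

Lemma desc_S_bottom lo len : desc lo (S len) = desc (S lo) len ++ [(lo, true)].
Proof. reflexivity. Qed.

Lemma desc_add lo x y : desc lo (x + y) = desc (lo + x) y ++ desc lo x.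
Proof. unfold desc, asc; rewrite seq_app, map_app, rev_app_distr; reflexivity. Qed.

Lemma asc_neg_desc_cancel n lo len : 1 <= lo -> lo + len <= n ->
  braid_equiv n (asc_neg lo len ++ desc lo len) [].
Proof.
  intros Hlo Hn; induction len as [|len IH]; [reflexivity|].
  rewrite asc_neg_S, desc_S.
  rewrite_at (asc_neg lo len) (desc lo len) (braid_cancel n (lo + len) false ltac:(lia)).
  simpl; apply IH; lia.
Qed.

Lemma desc_shift_letter n c j k : 1 <= c -> c + j < n -> c <= k < c + j ->
  braid_equiv n (desc c (S j) ++ [(S k, false)]) ([(k, false)] ++ desc c (S j)).
Proof.
  intros Hc Hn Hk.
  replace (S j) with ((k - c) + 2 + (j + c - k - 1)) by lia.
  rewrite !desc_add.
  replace (c + (k - c)) with k by lia.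
  change (desc k 2) with [(S k, true); (k, true)].
  assert (Hlow : in_range c (k - 1) (desc c (k - c))) by solve_range.
  assert (Hhigh : in_range (k + 2) (c + j) (desc (c + (k - c + 2)) (j + c - k - 1)))
    by solve_range.
  rewrite_at (desc (c + (k - c + 2)) (j + c - k - 1) ++ [(S k, true); (k, true)]) (@nil letter)
    (braid_comm_far n _ [(S k, false)] c (k - 1) (S k) (S k)
       ltac:(lia) ltac:(lia) ltac:(lia) ltac:(lia) Hlow ltac:(solve_range) ltac:(lia)).
  rewrite_at (desc (c + (k - c + 2)) (j + c - k - 1)) (desc c (k - c))
    (braid_conj_adjacent n k true ltac:(lia) ltac:(lia)).
  rewrite_at (@nil letter) ([(S k, true); (k, true)] ++ desc c (k - c))
    (braid_comm_far n _ [(k, false)] (k + 2) (c + j) k k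
       ltac:(lia) ltac:(lia) ltac:(lia) ltac:(lia) Hhigh ltac:(solve_range) ltac:(lia)).
  close_words.
Qed.

Lemma desc_shift_asc_neg n c j t : 1 <= c -> c + j < n -> t <= j ->
  braid_equiv n (desc c (S j) ++ asc_neg (S c) t) (asc_neg c t ++ desc c (S j)).
Proof.
  intros Hc Hn; induction t as [|t IH]; intros Ht; [close_words|].
  rewrite !asc_neg_S.
  rewrite_at (@nil letter) [(S c + t, false)] (IH ltac:(lia)).
  rewrite_at (asc_neg c t) (@nil letter)
    (desc_shift_letter n c j (c + t) ltac:(lia) ltac:(lia) ltac:(lia)).
  close_words.
Qed.

Lemma desc_conj_letter n i h t : 1 <= i -> i + t < n ->
  braid_equiv n (desc (S i) t ++ [(i, h)] ++ asc_neg (S i) t)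
                (asc_neg i t ++ [(i + t, h)] ++ desc i t).
Proof.
  intros Hi; induction t as [|t IH]; intros Hn; [rewrite Nat.add_0_r; close_words|].
  rewrite desc_S, !asc_neg_S, desc_S, Nat.add_succ_r; simpl plus.
  assert (Hneg : in_range i (i + t - 1) (asc_neg i t)) by solve_range.
  assert (Hdesc : in_range i (i + t - 1) (desc i t)) by solve_range.
  rewrite_at [(S (i + t), true)] [(S (i + t), false)] (IH ltac:(lia)).
  rewrite_at (@nil letter) ([(i + t, h)] ++ desc i t ++ [(S (i + t), false)])
    (braid_comm_far n [(S (i + t), true)] _ (S (i + t)) (S (i + t)) i (i + t - 1)
       ltac:(lia) ltac:(lia) ltac:(lia) ltac:(lia) ltac:(solve_range) Hneg ltac:(lia)).
  rewrite_at (asc_neg i t ++ [(S (i + t), true); (i + t, h)]) (@nil letter)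
    (braid_comm_far n _ [(S (i + t), false)] i (i + t - 1) (S (i + t)) (S (i + t))
       ltac:(lia) ltac:(lia) ltac:(lia) ltac:(lia) Hdesc ltac:(solve_range) ltac:(lia)).
  rewrite_at (asc_neg i t) (desc i t)
    (braid_conj_adjacent n (i + t) h ltac:(lia) ltac:(lia)).
  close_words.
Qed.

(* [factor p (p - a) (eta' p a g k) (g k (p - a)) k] is the [k]-th factor
   [η_k κ_(p-k) σ_(p-k+1)^-1 ⋯ σ_(p-1)^-1] of [lhs_braid p a g]. *)
Definition factor (n m : nat) (Y : word) (h : bool) (k : nat) : word :=
  Y ++ [(m, h)] ++ asc (m + 1) (n - k - m) ++ asc_neg (n - k + 1) (k - 1).

Fixpoint factors (n m : nat) (L : list (word * bool)) (k : nat) : word :=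
  match L with
  | [] => []
  | x :: L' => factor n m (fst x) (snd x) k ++ factors n m L' (S k)
  end.

Lemma factors_app_last n m L x k :
  factors n m (L ++ [x]) k = factors n m L k ++ factor n m (fst x) (snd x) (k + length L).
Proof.
  revert k; induction L as [|y L IH]; intros k; simpl.
  - rewrite Nat.add_0_r, app_nil_r; reflexivity.
  - rewrite IH, app_assoc, Nat.add_succ_r; reflexivity.
Qed.

Lemma factors_map_seq n m (f : nat -> word * bool) len k :
  factors n m (map f (seq k len)) k =
  flat_map (fun k => factor n m (fst (f k)) (snd (f k)) k) (seq k len).
Proof.
  revert k; induction len as [|len IH]; intros k; simpl; [reflexivity|].
  rewrite IH; reflexivity.
Qed.

Lemma valid_factors n m L k : 1 <= m -> Forall (fun x => valid m (fst x)) L -> 1 <= k ->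
  k + length L + m <= n + 1 -> valid n (factors n m L k).
Proof.
  revert k; induction L as [|[Y h] L IH]; intros k Hm HL Hk Hn; simpl; [constructor|].
  inversion HL as [|? ? HY HL']; subst; simpl in *.
  apply Forall_app; split.
  - unfold factor; solve_range.
  - apply IH; simpl; trivial; lia.
Qed.

Lemma desc_factor_carry m c j Y h : 1 <= m -> m < c -> valid m Y ->
  braid_equiv (S (c + j)) (desc (S c) j ++ factor (S (c + j)) m Y h (S j))
                          (factor (c + j) m Y h (S j) ++ desc c (S j)).
Proof.
  intros Hm Hc HY; unfold factor.
  replace (S (c + j) - S j - m) with (S (c - 1 - m)) by lia.
  replace (S (c + j) - S j + 1) with (S c) by lia.
  replace (c + j - S j - m) with (c - 1 - m) by lia.
  replace (c + j - S j + 1) with c by lia.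
  replace (S j - 1) with j by lia.
  rewrite asc_S; replace (m + 1 + (c - 1 - m)) with c by lia.
  assert (Hlow : in_range 1 (c - 1) (Y ++ [(m, h)] ++ asc (m + 1) (c - 1 - m)))
    by solve_range.
  assert (Hhigh : in_range (S c) (c + j) (desc (S c) j)) by solve_range.
  rewrite_at (@nil letter) ([(c, true)] ++ asc_neg (S c) j)
    (braid_comm_far (S (c + j)) _ _ (S c) (c + j) 1 (c - 1)
       ltac:(lia) ltac:(lia) ltac:(lia) ltac:(lia) Hhigh Hlow ltac:(lia)).
  assert (Hshift := desc_shift_asc_neg (S (c + j)) c j j ltac:(lia) ltac:(lia) ltac:(lia)).
  rewrite desc_S_bottom in Hshift.
  rewrite_at (Y ++ [(m, h)] ++ asc (m + 1) (c - 1 - m)) (@nil letter) Hshift.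
  close_words.
Qed.

Lemma desc_factors_carry m a L j : 1 <= m -> j + length L <= a ->
  Forall (fun x => valid m (fst x)) L ->
  braid_equiv (S (m + a)) (desc (S (m + a) - j) j ++ factors (S (m + a)) m L (S j))
    (factors (m + a) m L (S j) ++ desc (S (m + a) - j - length L) (j + length L)).
Proof.
  intros Hm; revert j; induction L as [|[Y h] L IH]; intros j Hj HL; simpl length.
  - rewrite Nat.sub_0_r, Nat.add_0_r, app_nil_r; close_words.
  - inversion HL as [|? ? HY HL']; subst; simpl in HY, Hj; cbn [factors fst snd].
    assert (Hcarry := desc_factor_carry m (m + a - j) j Y h Hm ltac:(lia) HY).
    replace (S (m + a - j + j)) with (S (m + a)) in Hcarry by lia.
    replace (m + a - j + j) with (m + a) in Hcarry by lia.
    replace (S (m + a - j)) with (S (m + a) - j) in Hcarry by lia.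
    assert (Htail : valid (S (m + a)) (factors (S (m + a)) m L (S (S j))))
      by (apply valid_factors; trivial; lia).
    assert (Hhead : valid (S (m + a)) (factor (m + a) m Y h (S j)))
      by (unfold factor; solve_range).
    replace (S (m + a) - j - S (length L)) with (m + a - j - length L) by lia.
    rewrite Nat.add_succ_r.
    rewrite_at (@nil letter) (factors (S (m + a)) m L (S (S j))) Hcarry.
    assert (HIH := IH (S j) ltac:(lia) HL').
    replace (S (m + a) - S j) with (m + a - j) in HIH by lia.
    rewrite_at (factor (m + a) m Y h (S j)) (@nil letter) HIH.
    close_words.
Qed.

Lemma markov_conj n u v : valid n u -> valid n v -> markov_equiv (n, u ++ v) (n, v ++ u).
Proof. intros; apply me_step, ms_conj; assumption. Qed.

Lemma markov_destab_conj n u v h : 1 <= n -> valid n u -> valid n v ->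
  markov_equiv (S n, u ++ [(n, h)] ++ v) (n, v ++ u).
Proof.
  intros Hn Hu Hv.
  apply me_trans with (S n, v ++ u ++ [(n, h)]).
  - rewrite app_assoc; apply markov_conj; solve_range.
  - apply me_sym; rewrite app_assoc; apply me_step, ms_stab; [assumption | solve_range].
Qed.

(* The result is bracketed so that [markov_destab_conj] applies to it. *)
Lemma factors_last_braid m a L Y h R : 1 <= m -> length L = a ->
  Forall (fun x => valid m (fst x)) L -> valid m Y -> valid m R ->
  braid_equiv (S (m + a)) (factors (S (m + a)) m L 1 ++ factor (S (m + a)) m Y h (S a) ++ R)
    ((factors (m + a) m L 1 ++ Y ++ asc_neg m a) ++ [(m + a, h)] ++ (desc m a ++ R)).
Proof.
  intros Hm HLa HL HY HR; unfold factor.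
  replace (S (m + a) - S a - m) with 0 by lia.
  replace (S (m + a) - S a + 1) with (S m) by lia.
  replace (S a - 1) with a by lia.
  change (asc (m + 1) 0) with (@nil letter).
  assert (Hcarry := desc_factors_carry m a L 0 Hm ltac:(lia) HL).
  rewrite Nat.sub_0_r, HLa in Hcarry.
  replace (S (m + a) - a) with (S m) in Hcarry by lia.
  change (desc (S (m + a)) 0) with (@nil letter) in Hcarry.
  assert (HX : valid (m + a) (factors (m + a) m L 1)) by (apply valid_factors; trivial; lia).
  assert (HYr : in_range 1 (m - 1) Y) by solve_range.
  assert (Hdesc : in_range (S m) (m + a) (desc (S m) a)) by solve_range.
  rewrite_at (@nil letter) (Y ++ [(m, h)] ++ [] ++ asc_neg (S m) a ++ R) Hcarry.
  rewrite_at (factors (m + a) m L 1) ([(m, h)] ++ asc_neg (S m) a ++ R)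
    (braid_comm_far (S (m + a)) _ _ (S m) (m + a) 1 (m - 1)
       ltac:(lia) ltac:(lia) ltac:(lia) ltac:(lia) Hdesc HYr ltac:(lia)).
  rewrite_at (factors (m + a) m L 1 ++ Y) R
    (desc_conj_letter (S (m + a)) m h a Hm ltac:(lia)).
  close_words.
Qed.

Lemma factors_markov_last m L Y h R : 1 <= m ->
  Forall (fun x => valid m (fst x)) L -> valid m Y -> valid m R ->
  markov_equiv (S (m + length L), factors (S (m + length L)) m (L ++ [(Y, h)]) 1 ++ R)
               (m + length L, factors (m + length L) m L 1 ++ Y ++ R).
Proof.
  intros Hm HL HY HR.
  rewrite factors_app_last, <- app_assoc; cbn [fst snd Nat.add].
  remember (length L) as a eqn:HLa.
  assert (HX : valid (m + a) (factors (m + a) m L 1)) by (apply valid_factors; trivial; lia).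
  eapply me_trans.
  { apply braid_equiv_markov, factors_last_braid; auto. }
  eapply me_trans.
  { apply markov_destab_conj; [lia | solve_range | solve_range]. }
  rewrite <- !app_assoc.
  eapply me_trans.
  { apply (markov_conj (m + a) (desc m a)); solve_range. }
  apply me_trans with (m + a, R ++ factors (m + a) m L 1 ++ Y).
  - apply braid_equiv_markov.
    rewrite_at (R ++ factors (m + a) m L 1 ++ Y) (@nil letter)
      (asc_neg_desc_cancel (m + a) m a Hm ltac:(lia)).
    close_words.
  - rewrite (app_assoc (factors _ _ _ _)); apply markov_conj; solve_range.
Qed.

Lemma factors_markov L : forall m R, 1 <= m ->
  Forall (fun x => valid m (fst x)) L -> valid m R ->
  markov_equiv (m + length L, factors (m + length L) m L 1 ++ R) (m, concat (map fst L) ++ R).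
Proof.
  induction L as [|[Y h] L IH] using rev_ind; intros m R Hm HL HR.
  - rewrite Nat.add_0_r; apply me_refl.
  - apply Forall_app in HL as [HL HYh]; inversion HYh as [|? ? HY]; subst; simpl in HY.
    rewrite length_app, Nat.add_1_r, Nat.add_succ_r, map_app, concat_app; simpl.
    rewrite app_nil_r, <- app_assoc.
    eapply me_trans; [apply factors_markov_last; assumption|].
    apply IH; trivial; solve_range.
Qed.

Definition eta_factors (p a : nat) (g : nat -> nat -> bool) : list (word * bool) :=
  map (fun k => (eta' p a g k, g k (p - a))) (seq 1 a).

Lemma lhs_braid_factors p a g : lhs_braid p a g = factors p (p - a) (eta_factors p a g) 1.
Proof.
  unfold lhs_braid, eta_factors; rewrite factors_map_seq; apply flat_map_ext; intros k.
  unfold factor, eta, kappa, inv_tail, asc, asc_neg; cbn [fst snd].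
  rewrite <- !app_assoc; reflexivity.
Qed.

Lemma rhs_braid_factors p a g : rhs_braid p a g = concat (map fst (eta_factors p a g)).
Proof. unfold rhs_braid, eta_factors; rewrite flat_map_concat_map, map_map; reflexivity. Qed.

Lemma valid_eta_factors p a g : Forall (fun x => valid (p - a) (fst x)) (eta_factors p a g).
Proof.
  apply Forall_map, Forall_forall; intros k _.
  apply Forall_map, Forall_forall; intros j Hj; apply in_seq in Hj; simpl; lia.
Qed.

Theorem lemma3p1 (p a : nat) (g : nat -> nat -> bool) :
  1 <= a -> a < p ->
  markov_equiv (p, lhs_braid p a g) (p - a, rhs_braid p a g).
Proof.
  intros Ha Hp.
  assert (Hlen : p - a + length (eta_factors p a g) = p)
    by (unfold eta_factors; rewrite length_map, length_seq; lia).
  assert (Hmain := factors_markov (eta_factors p a g) (p - a) []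
                     ltac:(lia) (valid_eta_factors p a g) (Forall_nil _)).
  rewrite !app_nil_r, Hlen in Hmain.
  rewrite lhs_braid_factors, rhs_braid_factors; exact Hmain.
Qed.
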